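(* Let $w=w_1\cdots w_n$ be a strict pin word and $(p_1,\dots,p_n)$, together with its origin $p_0$, the pin sequence encoded by $w$. For $i\ge2$ define $q(w_{i-1},w_i)=\phi^{-1}(w_{i-1}w_i)$ if $i\ge3$, and $q(w_1,w_2)=\phi^{-1}(BC)$ where $\phi(w_1w_2)=ABC$. Then for every $i\ge2$, $q(w_{i-1},w_i)$ is a numeral, and $p_i$ lies in quadrant $q(w_{i-1},w_i)$ with respect to $\{p_0,\dots,p_{i-2}\}$.
   Context: Pins are points of $\mathbb{Z}^2$. A pin $p$ separates a set $P$ from a set $Q$ horizontally (resp. vertically) if the horizontal (resp. vertical) line through $p$ has $P$ strictly on one side and $Q$ strictly on the other. A pin sequence is a sequence $(p_1,\dots,p_k)$ of pins, no two in a common row or column, such that for every $i\ge2$, $p_i$ lies outside the bounding box of $\{p_1,\dots,p_{i-1}\}$ and either $p_i$ separates $p_{i-1}$ from $\{p_1,\dots,p_{i-2}\}$ or $p_i$ is independent from $\{p_1,\dots,p_{i-1}\}$ (does not separate it into two nonempty sets). Pin words: given a pin sequence $(p_1,\dots,p_n)$ and an origin $p_0$ such that $(p_0,\dots,p_n)$ is a pin sequence, each $p_i$ ($i\ge1$) is encoded by $U$ (resp. $D,L,R$) if $p_i$ separates $p_{i-1}$ from $\{p_0,\dots,p_{i-2}\}$ and lies above (resp. below, left of, right of) the bounding box of $\{p_0,\dots,p_{i-1}\}$, and by $1$ (resp. $2,3,4$) if $p_i$ is independent from $\{p_0,\dots,p_{i-1}\}$ and lies in the up-right (resp. up-left, bottom-left,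 bottom-right) corner region of that bounding box. Letters $1,2,3,4$ are numerals, $U,D,L,R$ directions. A strict pin word is a pin word of length $\ge2$ whose first letter is a numeral and all others directions; it determines its pin sequence $(p_0,\dots,p_n)$ up to order isomorphism. A point $x$ lies in quadrant $1$ (resp. $2,3,4$) with respect to a finite set $S$ of points if its abscissa is larger (resp. smaller, smaller, larger) than all abscissas in $S$ and its ordinate is larger (resp. larger, smaller, smaller) than all ordinates in $S$. For a strict pin word $u=u'u''$ with $|u'|=2$, $\phi(u)=\varphi(u')u''$ with $\varphi$: $1R\mapsto RUR$, $2R\mapsto LUR$, $3R\mapsto LDR$, $4R\mapsto RDR$, $1L\mapsto RUL$, $2L\mapsto LUL$, $3L\mapsto LDL$, $4L\mapsto RDL$, $1U\mapsto URU$, $2U\mapsto ULU$, $3U\mapsto DLU$, $4U\mapsto DRU$, $1D\mapsto URD$, $2D\mapsto ULD$, $3D\mapsto DLD$, $4D\mapsto DRD$. On two-letter words of directions, $\phi^{-1}$ is defined by $\phi^{-1}(UR)=\phi^{-1}(RU)=1$, $\phi^{-1}(UL)=\phi^{-1}(LU)=2$, $\phi^{-1}(DL)=\phi^{-1}(LD)=3$, $\phi^{-1}(RD)=\phi^{-1}(DR)=4$. *)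

From Stdlib Require Import ZArith List.
Import ListNotations.
Open Scope Z_scope.

Definition point : Type := (Z * Z)%type.
Definition xc (p : point) : Z := fst p.
Definition yc (p : point) : Z := snd p.

Inductive letter : Type := N1 | N2 | N3 | N4 | U | D | L | R.

Definition is_numeral (c : letter) : Prop :=
  match c with N1 | N2 | N3 | N4 => True | _ => False end.
Definition is_direction (c : letter) : Prop :=
  match c with U | D | L | R => True | _ => False end.

Definition sep_h (p : point) (P Q : point -> Prop) : Prop :=
  ((forall a, P a -> yc a < yc p) /\ (forall b, Q b -> yc p < yc b)) \/
  ((forall a, P a -> yc p < yc a) /\ (forall b, Q b -> yc b < yc p)).
Definition sep_v (p : point) (P Q : point -> Prop) : Prop :=
  ((forall a, P a -> xc a < xc p) /\ (forall b, Q b -> xc p < xc b)) \/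
  ((forall a, P a -> xc p < xc a) /\ (forall b, Q b -> xc b < xc p)).
Definition separates (p : point) (P Q : point -> Prop) : Prop :=
  sep_h p P Q \/ sep_v p P Q.

Definition sep_from (p x : point) (S : list point) : Prop :=
  separates p (fun a => a = x) (fun a => In a S).

Definition independent (p : point) (S : list point) : Prop :=
  ~ exists P Q : point -> Prop,
      (forall a, In a S <-> (P a \/ Q a)) /\
      (exists a, P a) /\ (exists b, Q b) /\ separates p P Q.

Definition in_bbox (p : point) (S : list point) : Prop :=
  exists a b c d, In a S /\ In b S /\ In c S /\ In d S /\
    xc a <= xc p <= xc b /\ yc c <= yc p <= yc d.

(* pin sequence (p_1,...,p_k), here as a list indexed from 0 *)
Definition pin_seq (s : list point) : Prop :=
  (forall i j, (i < length s)%nat -> (j < length s)%nat -> i <> j ->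
     xc (nth i s (0,0)) <> xc (nth j s (0,0)) /\
     yc (nth i s (0,0)) <> yc (nth j s (0,0))) /\
  (forall i, (1 <= i < length s)%nat ->
     ~ in_bbox (nth i s (0,0)) (firstn i s) /\
     (sep_from (nth i s (0,0)) (nth (i - 1) s (0,0)) (firstn (i - 1) s)
      \/ independent (nth i s (0,0)) (firstn i s))).

Definition above (p : point) (S : list point) : Prop := forall a, In a S -> yc a < yc p.
Definition below (p : point) (S : list point) : Prop := forall a, In a S -> yc p < yc a.
Definition leftof (p : point) (S : list point) : Prop := forall a, In a S -> xc p < xc a.
Definition rightof (p : point) (S : list point) : Prop := forall a, In a S -> xc a < xc p.

Definition quadrant (q : letter) (x : point) (S : list point) : Prop :=
  match q with
  | N1 => forall a, In a S -> xc a < xc x /\ yc a < yc x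
  | N2 => forall a, In a S -> xc x < xc a /\ yc a < yc x
  | N3 => forall a, In a S -> xc x < xc a /\ yc x < yc a
  | N4 => forall a, In a S -> xc a < xc x /\ yc x < yc a
  | _ => False
  end.

(* letter c encodes point p given the previous points pre = (p_0,...,p_{i-1}) *)
Definition encodes (c : letter) (pre : list point) (p : point) : Prop :=
  let prev := last pre (0,0) in
  let older := removelast pre in
  match c with
  | U => sep_from p prev older /\ above p pre
  | D => sep_from p prev older /\ below p pre
  | L => sep_from p prev older /\ leftof p pre
  | R => sep_from p prev older /\ rightof p pre
  | N1 | N2 | N3 | N4 => independent p pre /\ quadrant c p pre
  end.

Definition encoded_by (w : list letter) (p0 : point) (ps : list point) : Prop :=
  length ps = length w /\ pin_seq (p0 :: ps) /\
  forall i, (1 <= i <= length w)%nat ->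
    encodes (nth (i - 1) w N1) (firstn i (p0 :: ps)) (nth i (p0 :: ps) p0).

Definition strict_pin_word (w : list letter) : Prop :=
  (2 <= length w)%nat /\
  match w with
  | c :: r => is_numeral c /\ Forall is_direction r
  | [] => False
  end.

Definition phi2 (a b : letter) : option (letter * letter * letter) :=
  match a, b with
  | N1, R => Some (R, U, R) | N2, R => Some (L, U, R)
  | N3, R => Some (L, D, R) | N4, R => Some (R, D, R)
  | N1, L => Some (R, U, L) | N2, L => Some (L, U, L)
  | N3, L => Some (L, D, L) | N4, L => Some (R, D, L)
  | N1, U => Some (U, R, U) | N2, U => Some (U, L, U)
  | N3, U => Some (D, L, U) | N4, U => Some (D, R, U)
  | N1, D => Some (U, R, D) | N2, D => Some (U, L, D)
  | N3, D => Some (D, L, D) | N4, D => Some (D, R, D)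
  | _, _ => None
  end.

Definition phiinv (a b : letter) : option letter :=
  match a, b with
  | U, R | R, U => Some N1
  | U, L | L, U => Some N2
  | D, L | L, D => Some N3
  | R, D | D, R => Some N4
  | _, _ => None
  end.

(* q(w_{i-1}, w_i) for 1-indexed i >= 2 *)
Definition qw (w : list letter) (i : nat) : option letter :=
  if Nat.eqb i 2 then
    match phi2 (nth 0 w N1) (nth 1 w N1) with
    | Some (_, B, C) => phiinv B C
    | None => None
    end
  else phiinv (nth (i - 2) w N1) (nth (i - 1) w N1).

From Stdlib Require Import ZArith List Lia.
Import ListNotations.
Open Scope Z_scope.

(* Every direction d is a signed coordinate [coord d], and lying beyond the
   bounding box in direction d means having the largest such coordinate.
   If X is beyond S in direction B and Y, beyond S ∪ {X} in a direction C
   perpendicular to B, separates X from S, then the separating line cannot be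
   perpendicular to C (all of S ∪ {X} lies on one side of it), so it is the
   line perpendicular to B: Y beats S along B but not X, and beats S along C,
   i.e. Y is in quadrant φ⁻¹(BC) with respect to S.  For i ≥ 3 the letters
   w_{i-1}, w_i cannot be parallel: the line through p_i separating p_{i-1}
   from the older points would then be parallel to w_{i-1}, leaving p_{i-2}
   and p_0 on the same side of p_{i-1} along the other axis, whereas p_{i-1}
   separates them and cannot do so along its own axis.  For i = 2 the
   numeral w_1 places p_1 beyond p_0 in the middle direction B of
   φ(w_1 w_2) = ABC, and C = w_2. *)

Definition sep_along (f : point -> Z) (p x : point) (S : list point) : Prop :=
  (f x < f p /\ forall b, In b S -> f p < f b) \/
  (f p < f x /\ forall b, In b S -> f b < f p).

Lemma sep_along_opp (f : point -> Z) (p x : point) (S : list point) :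
  sep_along (fun q => - f q) p x S <-> sep_along f p x S.
Proof.
  unfold sep_along; split; intros [[Hx HS] | [Hx HS]];
    [right | left | right | left]; split; try lia;
    intros b Hb; specialize (HS b Hb); lia.
Qed.

Lemma sep_from_along (p x : point) (S : list point) :
  sep_from p x S <-> sep_along yc p x S \/ sep_along xc p x S.
Proof.
  unfold sep_from, separates, sep_h, sep_v, sep_along.
  split.
  - intros [[[Hx HS] | [Hx HS]] | [[Hx HS] | [Hx HS]]];
      [ left; left | left; right | right; left | right; right ];
      split; auto.
  - intros [[[Hx HS] | [Hx HS]] | [[Hx HS] | [Hx HS]]];
      [ left; left | left; right | right; left | right; right ];
      split; auto; intros a ->; exact Hx.
Qed.

Definition coord (d : letter) (p : point) : Z :=
  match d with
  | U => yc p | D => - yc p | R => xc p | L => - xc p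
  | N1 | N2 | N3 | N4 => 0
  end.

Definition beyond (d : letter) (p : point) (S : list point) : Prop :=
  forall a, In a S -> coord d a < coord d p.

Lemma encodes_direction (d : letter) (pre : list point) (p : point) :
  is_direction d -> encodes d pre p ->
  sep_from p (last pre (0, 0)) (removelast pre) /\ beyond d p pre.
Proof.
  unfold encodes, beyond, above, below, leftof, rightof.
  destruct d; try contradiction; intros _ [Hsep Hb]; split; auto;
    simpl; intros a Ha; specialize (Hb a Ha); lia.
Qed.

Lemma sep_from_axes (d : letter) :
  is_direction d ->
  exists h : point -> Z, forall p x S,
    sep_from p x S -> sep_along (coord d) p x S \/ sep_along h p x S.
Proof.
  destruct d; try contradiction; intros _;
    [ exists xc | exists xc | exists yc | exists yc ];
    intros p x S Hsep; apply sep_from_along in Hsep; simpl;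
    rewrite ?(sep_along_opp yc), ?(sep_along_opp xc); tauto.
Qed.

Lemma sep_from_perp (B C q : letter) (p x : point) (S : list point) :
  phiinv B C = Some q -> sep_from p x S ->
  sep_along (coord B) p x S \/ sep_along (coord C) p x S.
Proof.
  intros Hq Hsep; apply sep_from_along in Hsep.
  destruct B, C; try discriminate; simpl;
    rewrite ?(sep_along_opp yc), ?(sep_along_opp xc); tauto.
Qed.

Lemma sep_along_parallel (a b : letter) (p x : point) (S : list point) :
  is_direction a -> is_direction b -> phiinv a b = None ->
  sep_along (coord a) p x S -> sep_along (coord b) p x S.
Proof.
  intros Ha Hb Hab.
  destruct a; try contradiction; destruct b; try contradiction;
    try discriminate; simpl; rewrite ?(sep_along_opp yc), ?(sep_along_opp xc);
    auto.
Qed.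

Lemma phiinv_numeral (B C q : letter) :
  phiinv B C = Some q -> is_numeral q.
Proof. destruct B, C; intros Hq; try discriminate; injection Hq as <-; exact I. Qed.

Lemma quadrant_of_coords (B C q : letter) (Y : point) (S : list point) :
  phiinv B C = Some q ->
  (forall s, In s S -> coord B s < coord B Y /\ coord C s < coord C Y) ->
  quadrant q Y S.
Proof.
  intros Hq HS.
  destruct B, C; try discriminate; injection Hq as <-; simpl;
    intros s Hs; specialize (HS s Hs); simpl in HS; lia.
Qed.

Section Separation.

Variables f g : point -> Z.

Lemma beyond_not_sep_along (X Y s : point) (S : list point) :
  (forall a, In a (S ++ [X]) -> g a < g Y) -> In s S -> ~ sep_along g Y X S.
Proof.
  intros HY Hs [[_ HS] | [HX _]].
  - specialize (HS s Hs); specialize (HY s (in_or_app _ _ _ (or_introl Hs))); lia.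
  - specialize (HY X (in_or_app _ _ _ (or_intror (in_eq X [])))); lia.
Qed.

Lemma turn_coords (X Y : point) (S : list point) :
  (forall s, In s S -> f s < f X) ->
  (forall a, In a (S ++ [X]) -> g a < g Y) ->
  sep_along f Y X S \/ sep_along g Y X S ->
  forall s, In s S -> f s < f Y /\ g s < g Y.
Proof.
  intros HX HY Hsep s Hs.
  destruct Hsep as [[[Hf HS] | [_ HS]] | Hg].
  - specialize (HS s Hs); specialize (HX s Hs); lia.
  - split; [exact (HS s Hs) | apply HY, in_or_app; left; exact Hs].
  - exfalso; exact (beyond_not_sep_along X Y s S HY Hs Hg).
Qed.

Lemma straight_turn_absurd (O : list point) (Z X Y o : point) :
  In o O ->
  sep_along f X Z O \/ sep_along g X Z O ->
  (forall a, In a (O ++ [Z]) -> f a < f X) ->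
  sep_along g Y X (O ++ [Z]) ->
  False.
Proof.
  intros Ho HsepX HX HsepY.
  assert (HoS : In o (O ++ [Z])) by (apply in_or_app; left; exact Ho).
  assert (HZS : In Z (O ++ [Z])) by (apply in_or_app; right; left; reflexivity).
  pose proof (HX o HoS); pose proof (HX Z HZS).
  destruct HsepY as [[HXY HSY] | [HXY HSY]];
    pose proof (HSY o HoS); pose proof (HSY Z HZS);
    destruct HsepX as [[[? HO] | [? HO]] | [[? HO] | [? HO]]];
    specialize (HO o Ho); lia.
Qed.

End Separation.

Lemma turn_quadrant (B C q : letter) (X Y : point) (S : list point) :
  phiinv B C = Some q ->
  beyond B X S -> beyond C Y (S ++ [X]) -> sep_from Y X S ->
  quadrant q Y S.
Proof.
  intros Hq HX HY Hsep.
  apply (quadrant_of_coords B C q Y S Hq).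
  exact (turn_coords (coord B) (coord C) X Y S HX HY (sep_from_perp B C q Y X S Hq Hsep)).
Qed.

Lemma direction_pair_quadrant (a b : letter) (O : list point) (Z X Y o : point) :
  is_direction a -> is_direction b -> In o O ->
  encodes a (O ++ [Z]) X -> encodes b ((O ++ [Z]) ++ [X]) Y ->
  exists q, phiinv a b = Some q /\ is_numeral q /\ quadrant q Y (O ++ [Z]).
Proof.
  intros Ha Hb Ho EX EY.
  apply encodes_direction in EX as [HsepX HX]; [|exact Ha].
  apply encodes_direction in EY as [HsepY HY]; [|exact Hb].
  rewrite last_last, removelast_last in HsepX, HsepY.
  destruct (phiinv a b) as [q|] eqn:Hab.
  - exists q; split; [reflexivity | split; [exact (phiinv_numeral a b q Hab) |]].
    exact (turn_quadrant a b q X Y (O ++ [Z]) Hab HX HY HsepY).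
  - exfalso.
    destruct (sep_from_axes a Ha) as [h Hh].
    assert (Hs : In o (O ++ [Z])) by (apply in_or_app; left; exact Ho).
    destruct (Hh Y X (O ++ [Z]) HsepY) as [Hpar | Hperp].
    + exact (beyond_not_sep_along (coord b) X Y o (O ++ [Z]) HY Hs
               (sep_along_parallel a b Y X (O ++ [Z]) Ha Hb Hab Hpar)).
    + exact (straight_turn_absurd (coord a) h O Z X Y o Ho (Hh X Z O HsepX) HX Hperp).
Qed.

Lemma phi2_shape (a b : letter) :
  is_numeral a -> is_direction b ->
  exists A B q, phi2 a b = Some (A, B, b) /\ phiinv B b = Some q.
Proof.
  destruct a; try contradiction; destruct b; try contradiction; intros _ _;
    do 3 eexists; split; reflexivity.
Qed.

Lemma phi2_middle_beyond (a b A B C : letter) (X : point) (S : list point) :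
  phi2 a b = Some (A, B, C) -> quadrant a X S -> beyond B X S.
Proof.
  intros Hphi HX s Hs.
  destruct a, b; try discriminate; injection Hphi as <- <- <-;
    specialize (HX s Hs); simpl; lia.
Qed.

Lemma numeral_pair_quadrant (a b : letter) (p0 X Y : point) :
  is_numeral a -> is_direction b ->
  encodes a [p0] X -> encodes b [p0; X] Y ->
  exists q, match phi2 a b with Some (_, B, C) => phiinv B C | None => None end = Some q
    /\ is_numeral q /\ quadrant q Y [p0].
Proof.
  intros Ha Hb EX EY.
  destruct (phi2_shape a b Ha Hb) as (A & B & q & Hphi & Hq).
  rewrite Hphi; exists q; split; [exact Hq | split; [exact (phiinv_numeral B b q Hq) |]].
  assert (HX : beyond B X [p0]).
  { apply (phi2_middle_beyond a b A B b X [p0] Hphi).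
    destruct a; try contradiction; exact (proj2 EX). }
  apply encodes_direction in EY as [HsepY HY]; [|exact Hb].
  exact (turn_quadrant B b q X Y [p0] Hq HX HY HsepY).
Qed.

Lemma firstn_snoc_nth {A : Type} (l : list A) (k : nat) (d : A) :
  (0 < k <= length l)%nat -> firstn k l = firstn (k - 1) l ++ [nth (k - 1) l d].
Proof.
  revert k; induction l as [|x l IH]; intros [|k] Hk; simpl in Hk; try lia.
  destruct k as [|k]; [reflexivity|].
  change (x :: firstn (S k) l = x :: (firstn k l ++ [nth k l d])).
  rewrite (IH (S k)) by lia; simpl; rewrite Nat.sub_0_r; reflexivity.
Qed.

Theorem lemma6 (w : list letter) (p0 : point) (ps : list point) :
  strict_pin_word w ->
  encoded_by w p0 ps ->
  forall i : nat, (2 <= i <= length w)%nat ->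
    exists c : letter,
      qw w i = Some c /\ is_numeral c /\
      quadrant c (nth i (p0 :: ps) p0) (firstn (i - 1) (p0 :: ps)).
Proof.
  intros [Hlen Hw] [Hl [_ Henc]] i Hi.
  destruct w as [|c1 [|c2 r]]; simpl in Hlen; try lia.
  destruct Hw as [Hc1 Hr].
  assert (Hdir : forall j, (1 <= j < length (c1 :: c2 :: r))%nat ->
                           is_direction (nth j (c1 :: c2 :: r) N1)).
  { intros [|j] Hj; [lia|]; change (is_direction (nth j (c2 :: r) N1)).
    apply Forall_nth; [exact Hr | simpl in *; lia]. }
  pose proof (Henc (i - 1)%nat ltac:(lia)) as EX.
  pose proof (Henc i ltac:(lia)) as EY.
  destruct (Nat.eq_dec i 2) as [->|Hi3].
  - destruct ps as [|X [|Y ps']]; simpl in Hl; try lia.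
    exact (numeral_pair_quadrant c1 c2 p0 X Y Hc1 (Hdir 1%nat ltac:(simpl; lia)) EX EY).
  - unfold qw; replace (Nat.eqb i 2) with false
      by (symmetry; apply Nat.eqb_neq; exact Hi3).
    set (Lp := p0 :: ps) in *.
    assert (HLp : length Lp = S (length ps)) by reflexivity.
    rewrite (firstn_snoc_nth Lp i p0), (firstn_snoc_nth Lp (i - 1) p0) in EY by lia.
    rewrite (firstn_snoc_nth Lp (i - 1) p0) in EX |- * by lia.
    replace (i - 1 - 1)%nat with (i - 2)%nat in EX, EY |- * by lia.
    eapply (direction_pair_quadrant _ _ _ _ _ _ p0);
      [apply Hdir; lia | apply Hdir; lia | | exact EX | exact EY].
    replace (i - 2)%nat with (S (i - 3)) by lia; left; reflexivity.
Qed.
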